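(* Let $v:\mathcal Q\to\mathbb R$ be the valuation induced by an assignment message, and let $\mathbf p\in\mathbb R^n$. Consider the linear program (MCF) in variables $y_I$, $I\in\mathcal I$: minimize $\sum_{i=1}^n\sum_{j\in R_i}(p_i-v_j)\,y_{\{j\}}$ subject to $y_I-\sum_{K\in s_0(I)}y_K=0$ for all non-singleton $I\in\mathcal T_0$; $\sum_{K\in s_i(I)}y_K-y_I=0$ for all non-singleton $I\in\mathcal T_i$, $i=1,\dots,n$; $\sum_{i=1}^n y_{R_i}-y_{R_0}=0$; $\ell(I)\le y_I\le u(I)$ for all $I\in\mathcal I$. Then $\mathbf q\in D(\mathbf p)$ if and only if there is an integral optimal solution $\mathbf y$ of (MCF) with $q_i=y_{R_i}$ for all $i=1,\dots,n$.
   Context: There are $n\ge2$ goods; $D(\mathbf p)=\arg\max_{\mathbf q\in\mathcal Q}v(\mathbf q)-\langle\mathbf p,\mathbf q\rangle$. A family $\mathcal T$ of subsets of a finite set $J$ is a tree if it is nonempty and any two members with nonempty intersection are nested. For $K\in\mathcal T$, its predecessor is the inclusion-minimal $L\in\mathcal T$ with $L\supsetneq K$ (if it exists), and $s_{\mathcal T}(L)$ is the set of $K\in\mathcal T$ whose predecessor is $L$. An assignment message consists of variables $J=\{1,\dots,m\}$, each $j$ associated with a good $k_j\in\{1,\dots,n\}$ and value $v_j\in\mathbb R$, with $R_i=\{j:k_j=i\}$ nonempty for all $i\ge1$ and $R_0:=J$; and a family $\mathcal I=\mathcal T_0\cup\dots\cup\mathcal T_n$ of subsets of $J$ with integral bounds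 $\ell(I)\le 0\le u(I)$, where each $\mathcal T_i$ is a tree, for $i\ge1$ $\mathcal T_i\subseteq\mathcal P(R_i)$ contains $R_i$ and all $\{j\}$, $j\in R_i$, and $\mathcal T_0$ contains $J$ and all $\{j\}$, $j\in J$. We write $s_i(L):=s_{\mathcal T_i}(L)$. It is assumed (without loss of generality) that the trees intersect only in terminal nodes: $\mathcal T_0\cap\mathcal T_i=\{\{j\}:j\in R_i\}$ and $\mathcal T_i\cap\mathcal T_k=\emptyset$ for distinct $i,k\ge1$. The induced valuation is $v(\mathbf q)=\max\{\sum_jv_jx_j:\mathbf x\in\mathbb Z^m,\ \ell(I)\le\sum_{j\in I}x_j\le u(I)\ \forall I\in\mathcal I,\ \sum_{j\in R_i}x_j=q_i\ \forall i\}$ on the set $\mathcal Q$ of $\mathbf q\in\mathbb Z^n$ for which this is feasible. *)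

From HB Require Import structures.
From mathcomp Require Import all_boot all_order all_algebra.
From mathcomp Require Import reals.
Set Implicit Arguments. Unset Strict Implicit. Unset Printing Implicit Defensive.
Import Order.TTheory GRing.Theory Num.Theory.
Local Open Scope ring_scope.

(* Goods are indexed by 'I_n (good i of the paper, 1<=i<=n, is i-1 here).
   Variables J = {1..m} are indexed by 'I_m. *)

Definition is_tree (m : nat) (T : {set {set 'I_m}}) : Prop :=
  T != set0 /\
  forall A B, A \in T -> B \in T -> A :&: B != set0 ->
    (A \subset B) || (B \subset A).

Definition is_pred (m : nat) (T : {set {set 'I_m}}) (K L : {set 'I_m}) : bool :=
  [&& L \in T, K \proper L &
      [forall L' in T, (K \proper L') ==> (L \subset L')]].

Definition succs (m : nat) (T : {set {set 'I_m}}) (L : {set 'I_m}) : {set {set 'I_m}} :=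
  [set K in T | is_pred T K L].

Definition Rset (n m : nat) (k : 'I_m -> 'I_n) (i : 'I_n) : {set 'I_m} :=
  [set j | k j == i].

Definition Ifam (n m : nat) (T0 : {set {set 'I_m}}) (T : 'I_n -> {set {set 'I_m}})
  : {set {set 'I_m}} := T0 :|: \bigcup_(i < n) T i.

Definition assignment_message (n m : nat) (k : 'I_m -> 'I_n)
  (T0 : {set {set 'I_m}}) (T : 'I_n -> {set {set 'I_m}})
  (l u : {set 'I_m} -> int) : Prop :=
  [/\ (forall i, Rset k i != set0),
      (is_tree T0 /\ (forall i, is_tree (T i))),
      (forall i, [/\ (forall I, I \in T i -> I \subset Rset k i),
                     Rset k i \in T i &
                     (forall j, j \in Rset k i -> [set j] \in T i)]),
      ([set: 'I_m] \in T0 /\ (forall j, [set j] \in T0)) &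
      [/\ (forall i, T0 :&: T i = [set [set j] | j in Rset k i]),
          (forall i i', i != i' -> T i :&: T i' = set0) &
          (forall I, I \in Ifam T0 T -> (l I <= 0)%R /\ (0 <= u I)%R)]].

Section Valuation.
Variables (R : realType) (n m : nat) (k : 'I_m -> 'I_n) (vv : 'I_m -> R)
  (T0 : {set {set 'I_m}}) (T : 'I_n -> {set {set 'I_m}})
  (l u : {set 'I_m} -> int).

(* x in Z^m is feasible for q in the program defining v(q). *)
Definition x_feasible (q : 'I_n -> int) (x : 'I_m -> int) : Prop :=
  (forall I, I \in Ifam T0 T ->
     (l I <= \sum_(j in I) x j)%R /\ (\sum_(j in I) x j <= u I)%R) /\
  (forall i, \sum_(j in Rset k i) x j = q i).

Definition x_value (x : 'I_m -> int) : R := \sum_(j < m) vv j * (x j)%:~R.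

Definition in_Q (q : 'I_n -> int) : Prop := exists x, x_feasible q x.

(* w = v(q), i.e. w is the maximum of the program defining v(q). *)
Definition is_val (q : 'I_n -> int) (w : R) : Prop :=
  (exists x, x_feasible q x /\ x_value x = w) /\
  (forall x, x_feasible q x -> x_value x <= w).

Definition pairing (p : 'I_n -> R) (q : 'I_n -> int) : R :=
  \sum_(i < n) p i * (q i)%:~R.

Definition demand (p : 'I_n -> R) (q : 'I_n -> int) : Prop :=
  in_Q q /\
  exists w, is_val q w /\
    forall q' w', in_Q q' -> is_val q' w' -> w' - pairing p q' <= w - pairing p q.

Definition mcf_feasible (y : {set 'I_m} -> R) : Prop :=
  [/\ (forall I, I \in T0 -> #|I| != 1%N ->
         y I - \sum_(K in succs T0 I) y K = 0),
      (forall i I, I \in T i -> #|I| != 1%N ->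
         \sum_(K in succs (T i) I) y K - y I = 0),
      \sum_(i < n) y (Rset k i) - y [set: 'I_m] = 0 &
      (forall I, I \in Ifam T0 T -> (l I)%:~R <= y I /\ y I <= (u I)%:~R)].

Definition mcf_obj (p : 'I_n -> R) (y : {set 'I_m} -> R) : R :=
  \sum_(i < n) \sum_(j in Rset k i) (p i - vv j) * y [set j].

Definition mcf_optimal (p : 'I_n -> R) (y : {set 'I_m} -> R) : Prop :=
  mcf_feasible y /\ forall y', mcf_feasible y' -> mcf_obj p y <= mcf_obj p y'.

Definition integral_sol (y : {set 'I_m} -> R) : Prop :=
  forall I, I \in Ifam T0 T -> exists z : int, y I = z%:~R.

End Valuation.

From mathcomp Require Import all_boot all_order all_algebra.
From mathcomp Require Import reals.
From mathcomp Require Import zify lra.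
From Stdlib Require Import FunctionalExtensionality.
Set Implicit Arguments. Unset Strict Implicit. Unset Printing Implicit Defensive.
Import Order.TTheory GRing.Theory Num.Theory.
Local Open Scope ring_scope.

(* Every feasible y of (MCF) is additive on the family I: its balance
   equations force y(I) = sum_{j in I} y({j}), so y is the lift of the
   assignment x_j = y({j}), and the objective of a lift is <p,q> - value(x).
   Hence integral feasible solutions of (MCF) and feasible assignments are
   the same thing, and the theorem reduces to the integrality of (MCF):
   every feasible y is dominated in cost by an integral feasible z.

   Integrality is proved for an arbitrary network, i.e. a system where
   each variable (arc) occurs with +1 in at most one equation (its head)
   and with -1 in at most one (its tail). If a conservative y within
   integer bounds has fractional arcs, counting incidences and a rank
   argument give a nonzero circulation supported on them; moving along it
   in the cost-nonincreasing direction until one more arc becomes integral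
   stays within the integer box of y, and induction concludes. *)

Lemma underdetermined_kernel (F : fieldType) (E : finType) (fs : seq (E -> F))
    (S : {set E}) : (size fs < #|S|)%N ->
  exists d : E -> F, [/\ forall e, e \notin S -> d e = 0, exists e, d e != 0 &
     all (fun f => \sum_e f e * d e == 0) fs].
Proof.
move=> ltfS.
pose A : 'M[F]_(#|S|, size fs) := \matrix_(i, c) nth (fun=> 0) fs c (enum_val i).
have /negP : kermx A != 0.
  rewrite -mxrank_eq0 mxrank_ker subn_eq0 -ltnNge.
  exact: leq_ltn_trans (rank_leq_col A) ltfS.
have [i0 nz_u | all0] := pickP (fun i => row i (kermx A) != 0); last first.
  case; apply/eqP/row_matrixP => i; rewrite row0; exact/eqP/negbFE/all0.
set u := row i0 (kermx A) in nz_u.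
have uA0 : u *m A = 0 by rewrite -row_mul mulmx_ker row0.
have [r0 nz_r0] : exists r, u 0 r != 0.
  apply/existsP; apply: contraR nz_u => /existsPn u0.
  apply/eqP/rowP => r; rewrite [RHS]mxE; apply/eqP; exact: negbNE (u0 r).
exists (fun e => \sum_(r | enum_val r == e) u 0 r); split.
- move=> e eS; apply: big1 => r /eqP er; case/negP: eS; rewrite -er; exact: enum_valP.
- exists (enum_val r0); rewrite (big_pred1 r0) // => r; exact: (inj_eq enum_val_inj).
- apply/(all_nthP (fun=> 0)) => c ltc; apply/eqP.
  have /rowP/(_ (Ordinal ltc)) := uA0; rewrite !mxE => uAc.
  rewrite -[RHS]uAc; under eq_bigr do rewrite mulr_sumr.
  rewrite (exchange_big_dep xpredT) //=; apply: eq_bigr => r _.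
  by rewrite (big_pred1 (enum_val r)) => [|e]; rewrite ?mxE 1?mulrC // eq_sym.
Qed.

Section RoundingBox.
Variables (R : archiRealFieldType) (E : finType).

Lemma frac_bounds (x : R) : x \isn't a Num.int ->
  (Num.floor x)%:~R < x /\ x < (Num.ceil x)%:~R.
Proof.
move=> xNint; rewrite !lt_neqAle floor_le ceil_ge !andbT.
by split; [apply: contraNneq xNint => <- | apply: contraNneq xNint => ->]; rewrite intr_int.
Qed.

Lemma rounding_box (y d : E -> R) (e0 : E) :
  (forall e, d e != 0 -> y e \isn't a Num.int) -> d e0 != 0 ->
  exists t : R, [/\ 0 < t,
    forall e, (Num.floor (y e))%:~R <= y e + t * d e <= (Num.ceil (y e))%:~R &
    exists2 e1, d e1 != 0 & y e1 + t * d e1 \is a Num.int].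
Proof.
move=> suppd nz_e0.
pose step e := ((if 0 < d e then Num.ceil (y e) else Num.floor (y e))%:~R - y e) / d e.
have [e1 nz_e1 step_min] := @arg_minP _ R E e0 (fun e => d e != 0) step nz_e0.
have step_gt0 e : d e != 0 -> 0 < step e.
  move=> nz_e; have [lt_fy lt_yc] := frac_bounds (suppd e nz_e).
  rewrite /step; case: ifP => [d_gt0 | /negbT]; first by rewrite divr_gt0 ?subr_gt0.
  rewrite -leNgt le_eqVlt (negPf nz_e) /= => d_lt0.
  by rewrite -mulrNN -invrN divr_gt0 ?oppr_gt0 ?subr_lt0.
pose t := step e1; have t_gt0 : 0 < t := step_gt0 e1 nz_e1.
exists t; split => //.
- move=> e; have [d0 | nz_e] := eqVneq (d e) 0.
    by rewrite d0 mulr0 addr0 floor_le ceil_ge.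
  have := step_min e nz_e; rewrite -/t /step; case: (ltP 0 (d e)) => [d_gt0 | d_le0] le_t.
    have td_ge0 : 0 <= t * d e by rewrite mulr_ge0 ?ltW.
    rewrite (le_trans (floor_le _)) ?lerDl //=.
    by rewrite -lerBrDl -(divfK nz_e (_ - _)) ler_wpM2r // ltW.
  have d_lt0 : d e < 0 by rewrite lt_neqAle nz_e.
  have td_le0 : t * d e <= 0 by rewrite pmulr_rle0 // ltW.
  rewrite (le_trans _ (ceil_ge _)) ?gerDl // andbT.
  by rewrite -lerBlDl -(divfK nz_e (_ - _)) ler_wnM2r // ltW.
- exists e1 => //; rewrite /t /step divfK // addrC subrK.
  by case: ifP; rewrite intr_int.
Qed.

End RoundingBox.

(* A network: each arc e leaves node [src e] and enters node [dst e], if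
   any; [inc q e] is the entry of the node-arc incidence matrix. *)
Section Network.
Variables (R : archiRealFieldType) (E Q : finType) (src dst : E -> option Q).

Definition inc (q : Q) (e : E) : R := (dst e == Some q)%:R - (src e == Some q)%:R.

Definition conservative (y : E -> R) : Prop := forall q, \sum_e inc q e * y e = 0.

Definition fractional (y : E -> R) : {set E} := [set e | y e \isn't a Num.int].

Definition ends (e : E) : {set Q} := [set q | inc q e != 0].

Lemma sum_inc (y : E -> R) q : \sum_e inc q e * y e =
  \sum_(e | dst e == Some q) y e - \sum_(e | src e == Some q) y e.
Proof.
rewrite /inc; under eq_bigr do rewrite mulrBl.
rewrite sumrB !(big_mkcond (fun e => _ == _)) /=.
by congr (_ - _); apply: eq_bigr => e _; case: ifP; rewrite ?mul1r ?mul0r.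
Qed.

Lemma inc_int q e : inc q e \is a Num.int.
Proof. by rewrite rpredB ?rpred_nat. Qed.

Lemma inc_unit q e : inc q e != 0 -> inc q e * inc q e = 1.
Proof.
by rewrite /inc; case: (dst e == Some q); case: (src e == Some q);
  rewrite ?subrr ?eqxx //= ?subr0 ?mulr1 ?sub0r ?mulrNN ?mulr1.
Qed.

Lemma card_ends_le1 e : (dst e == None) || (src e == None) -> (#|ends e| <= 1)%N.
Proof.
rewrite /ends /inc; case: (dst e) => [a|]; case: (src e) => [b|] //= _.
- apply: leq_trans (subset_leq_card _) (_ : #|[set a]| <= 1)%N; last by rewrite cards1.
  by apply/subsetP => q; rewrite !inE subr0 pnatr_eq0 eqb0 negbK => /eqP [->].
- apply: leq_trans (subset_leq_card _) (_ : #|[set b]| <= 1)%N; last by rewrite cards1.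
  by apply/subsetP => q; rewrite !inE sub0r oppr_eq0 pnatr_eq0 eqb0 negbK => /eqP [->].
- by rewrite (eq_card0 (A := [set q | (0 : R) - 0 != 0])) // => q; rewrite !inE subrr eqxx.
Qed.

Lemma card_ends_le2 e : (#|ends e| <= 2)%N.
Proof.
case Hd: (dst e) => [a|]; last by rewrite (leq_trans (card_ends_le1 _)) // Hd.
case Hs: (src e) => [b|]; last by rewrite (leq_trans (card_ends_le1 _)) // Hs orbT.
apply: leq_trans (subset_leq_card _) (_ : #|[set a; b]| <= 2)%N; last by rewrite cards2 ltnS leq_b1.
apply/subsetP => q; rewrite !inE /inc Hd Hs /= !(inj_eq (@Some_inj _)) ![q == _]eq_sym.
by case: (a == q); case: (b == q); rewrite ?orbT //= subrr eqxx.
Qed.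

Lemma sum_inc_two_ends e : #|ends e| = 2 -> \sum_q inc q e = 0.
Proof.
move=> ends2; have /norP[] : ~~ ((dst e == None) || (src e == None)).
  by apply/negP => /card_ends_le1; rewrite ends2.
have sum1 (a : Q) : \sum_q ((Some a == Some q)%:R : R) = 1.
  by rewrite (bigD1 a) //= eqxx big1 ?addr0 // => q qa; rewrite (inj_eq (@Some_inj _)) eq_sym (negPf qa).
by rewrite /inc sumrB; case: (dst e) => [a|]; case: (src e) => [b|] //= _ _; rewrite !sum1 subrr.
Qed.

Definition frac_arcs (y : E -> R) (q : Q) : {set E} :=
  [set e in fractional y | inc q e != 0].

Definition touched (y : E -> R) : {set Q} := [set q | frac_arcs y q != set0].

Lemma touchedP (y : E -> R) q e :
  e \in fractional y -> inc q e != 0 -> q \in touched y.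
Proof. by move=> eF nz; rewrite inE; apply/set0Pn; exists e; rewrite inE eF. Qed.

Lemma frac_arcs_card (y : E -> R) q : conservative y ->
  q \in touched y -> (1 < #|frac_arcs y q|)%N.
Proof.
rewrite inE => cons /set0Pn [e0 e0F]; rewrite ltnNge; apply/negP => le1.
have Fq : frac_arcs y q = [set e0].
  by apply/eqP; rewrite eq_sym eqEcard sub1set e0F cards1.
move: e0F; rewrite inE => /andP [e0frac nz0].
have : inc q e0 * y e0 \is a Num.int.
  have := cons q; rewrite (bigD1 e0) //= => /eqP; rewrite addr_eq0 => /eqP ->.
  rewrite rpredN rpred_sum // => e ne0.
  have [->|nz] := eqVneq (inc q e) 0; first by rewrite mul0r rpred0.
  rewrite rpredM ?inc_int //; apply: contraR ne0 => yNint.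
  have : e \in frac_arcs y q by rewrite !inE yNint nz.
  by rewrite Fq inE.
move=> int0; case/negP: e0frac; rewrite inE.
by rewrite -[y e0]mul1r -(inc_unit nz0) -mulrA rpredM ?inc_int.
Qed.

Lemma double_count (y : E -> R) :
  (\sum_q #|frac_arcs y q| = \sum_(e in fractional y) #|ends e|)%N.
Proof.
have card_sum (A : {set E}) (P : pred E) :
    #|[set e in A | P e]| = (\sum_(e in A) P e)%N.
  rewrite -sum1_card big_mkcond [RHS]big_mkcond; apply: eq_bigr => e _.
  by rewrite !inE; case: (e \in A); case: (P e).
rewrite (eq_bigr _ (fun q _ => card_sum _ _)) exchange_big /=.
apply: eq_bigr => e _; rewrite -sum1_card [RHS]big_mkcond /=.
by apply: eq_bigr => q _; rewrite inE; case: (_ != _).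
Qed.

(* Counting incidences: each touched node has at least two fractional arcs
   and each arc has at most two ends. *)
Lemma touched_count (y : E -> R) : conservative y ->
  (2 * #|touched y| <= \sum_(e in fractional y) #|ends e| <= 2 * #|fractional y|)%N.
Proof.
move=> cons; rewrite -double_count; apply/andP; split.
  rewrite (bigID (mem (touched y))) /= mulnC -sum_nat_const.
  apply: leq_trans (leq_addr _ _); apply: leq_sum => q; exact: frac_arcs_card.
rewrite double_count mulnC -sum_nat_const.
by apply: leq_sum => e _; exact: card_ends_le2.
Qed.

(* With no more fractional arcs than touched nodes, the counting is tight:
   every fractional arc has two ends. *)
Lemma fractional_two_ends (y : E -> R) : conservative y ->
  (#|fractional y| <= #|touched y|)%N ->
  forall e, e \in fractional y -> #|ends e| = 2.
Proof.
move=> cons leFT; have /andP [lo_sum hi_sum] := touched_count cons.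
have [_ eq_all] := @leqif_sum _ (mem (fractional y)) _ _ (fun=> 2%N)
  (fun e _ => leqif_eq (card_ends_le2 e)).
have : (\sum_(e in fractional y) #|ends e| == \sum_(e in fractional y) 2)%N.
  rewrite sum_nat_const mulnC eqn_leq hi_sum /=.
  by apply: leq_trans lo_sum; rewrite leq_mul2l leFT orbT.
by rewrite eq_all => /forall_inP all2 e /all2/eqP.
Qed.

Lemma partial_circulation (y : E -> R) (Qs : {set Q}) :
  (#|Qs| < #|fractional y|)%N -> exists d : E -> R,
    [/\ forall e, e \notin fractional y -> d e = 0, exists e, d e != 0 &
        forall q, q \in Qs -> \sum_e inc q e * d e = 0].
Proof.
move=> ltQF.
have [|d [dsupp nzd]] := @underdetermined_kernel _ _ (map inc (enum Qs)) (fractional y).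
  by rewrite size_map -cardE.
rewrite all_map => /allP eqs; exists d; split => // q qQ.
by apply/eqP; apply: eqs; rewrite mem_enum.
Qed.

Lemma untouched_conservation (y d : E -> R) q :
  (forall e, e \notin fractional y -> d e = 0) -> q \notin touched y ->
  \sum_e inc q e * d e = 0.
Proof.
move=> dsupp qNT; apply: big1 => e _.
have [eF|/dsupp->] := boolP (e \in fractional y); last by rewrite mulr0.
have [-> | /(touchedP eF) qT] := eqVneq (inc q e) 0; first by rewrite mul0r.
by rewrite qT in qNT.
Qed.

Lemma frac_circulation (y : E -> R) : conservative y -> fractional y != set0 ->
  exists d : E -> R, [/\ forall e, d e != 0 -> e \in fractional y,
                         exists e, d e != 0 & conservative d].
Proof.
move=> cons nzF; set Fs := fractional y; set Qt := touched y.
have suppF (d : E -> R) : (forall e, e \notin Fs -> d e = 0) ->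
    forall e, d e != 0 -> e \in Fs.
  by move=> dsupp e; apply: contraR => /dsupp ->; rewrite eqxx.
have [ltTF | leFT] := ltnP #|Qt| #|Fs|.
  have [d [dsupp nzd eqs]] := partial_circulation ltTF.
  exists d; split => //; first exact: suppF.
  move=> q; have [/eqs //|qNT] := boolP (q \in Qt); exact: untouched_conservation dsupp qNT.
have ends2 := fractional_two_ends cons leFT.
have [e0 e0F] := set0Pn _ nzF.
have [q0 q0e0] : exists q0, q0 \in ends e0 by apply/set0Pn; rewrite -card_gt0 ends2.
have q0T : q0 \in Qt by apply: touchedP e0F _; rewrite inE in q0e0.
have [|d [dsupp nzd eqs]] := partial_circulation (y := y) (Qs := Qt :\ q0).
  have /andP [lo_sum hi_sum] := touched_count cons.
  have ltQT : (#|Qt :\ q0| < #|Qt|)%N by rewrite [X in (_ < X)%N](cardsD1 q0) q0T.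
  apply: leq_trans ltQT _; rewrite -(leq_pmul2l (isT : 0 < 2)%N).
  exact: leq_trans lo_sum hi_sum.
exists d; split => //; first exact: suppF.
(* The equation at q0 is the negated sum of the others, since every
   fractional arc enters one touched node and leaves another. *)
have col_sum e : e \in Fs -> \sum_(q in Qt) inc q e = 0.
  move=> eF; have := sum_inc_two_ends (ends2 e eF).
  rewrite (bigID (mem Qt)) /= [X in _ + X]big1 ?addr0 => [// | q qNT].
  by apply/eqP; apply: contraR qNT; apply: touchedP.
have total : \sum_(q in Qt) \sum_e inc q e * d e = 0.
  rewrite exchange_big /=; apply: big1 => e _; rewrite -mulr_suml.
  have [eF|eNF] := boolP (e \in Fs); first by rewrite col_sum ?mul0r.
  by rewrite dsupp ?mulr0.
move=> q; have [qT|qNT] := boolP (q \in Qt); last exact: untouched_conservation dsupp qNT.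
have [->|nq0] := eqVneq q q0; last by apply: eqs; rewrite in_setD1 nq0.
move: total; rewrite (bigD1 q0) //= [X in _ + X]big1 => [|q' /andP [q'T nq']].
  by rewrite addr0.
by apply: eqs; rewrite in_setD1 nq' q'T.
Qed.

Lemma conservativeD (y d : E -> R) (t : R) :
  conservative y -> conservative d -> conservative (fun e => y e + t * d e).
Proof.
move=> consy consd q; under eq_bigr do rewrite mulrDr mulrCA.
by rewrite big_split /= -mulr_sumr consy consd mulr0 addr0.
Qed.

Lemma round_step (lo hi : E -> int) (c y : E -> R) :
  conservative y -> (forall e, (lo e)%:~R <= y e <= (hi e)%:~R) ->
  fractional y != set0 ->
  exists y' : E -> R, [/\ conservative y',
    forall e, (lo e)%:~R <= y' e <= (hi e)%:~R,
    \sum_e c e * y' e <= \sum_e c e * y e &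
    (#|fractional y'| < #|fractional y|)%N].
Proof.
move=> consy box nzF.
have [d [dsupp [e0 nz0] consd]] := frac_circulation consy nzF.
pose s : R := if \sum_e c e * d e <= 0 then 1 else -1.
have s_nz : s != 0 by rewrite /s; case: ifP; rewrite ?oppr_eq0 oner_eq0.
pose d' e := s * d e.
have nz_d' e : (d' e != 0) = (d e != 0) by rewrite mulf_eq0 negb_or s_nz.
have cost_d' : \sum_e c e * d' e <= 0.
  under eq_bigr do rewrite mulrCA; rewrite -mulr_sumr /s.
  by case: ifP => [|/negbT]; rewrite ?mul1r // -ltNge mulN1r oppr_le0 => /ltW.
have supp_d' e : d' e != 0 -> y e \isn't a Num.int.
  by rewrite nz_d' => /dsupp; rewrite inE.
have nz_d'0 : d' e0 != 0 by rewrite nz_d'.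
have [t [t_gt0 inbox [e1 nz1 int1]]] := rounding_box supp_d' nz_d'0.
exists (fun e => y e + t * d' e); split.
- by move=> q; rewrite /d'; under eq_bigr do rewrite mulrA; exact: conservativeD.
- move=> e; have /andP [lo_y y_hi] := box e; have /andP [fl_y' y'_cl] := inbox e.
  apply/andP; split.
    by apply: le_trans fl_y'; rewrite ler_int floor_ge_int.
  by apply: le_trans y'_cl _; rewrite ler_int ceil_le_int.
- under eq_bigr do rewrite mulrDr mulrCA.
  by rewrite big_split /= -mulr_sumr gerDl pmulr_rle0.
- have e1F : e1 \in fractional y by apply: dsupp; rewrite -nz_d'.
  rewrite (cardsD1 e1 (fractional y)) e1F add1n ltnS subset_leq_card //.
  apply/subsetP => e; rewrite !inE; have [->|ne1] := eqVneq e e1; first by rewrite int1.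
  have [->|nz] := eqVneq (d' e) 0; first by rewrite mulr0 addr0.
  by move=> _; rewrite nz_d' in nz; have := dsupp e nz; rewrite inE.
Qed.

Lemma integral_rounding (lo hi : E -> int) (c y : E -> R) :
  conservative y -> (forall e, (lo e)%:~R <= y e <= (hi e)%:~R) ->
  exists z : E -> int, [/\ conservative (fun e => (z e)%:~R),
    forall e, (lo e <= z e <= hi e)%R &
    \sum_e c e * (z e)%:~R <= \sum_e c e * y e].
Proof.
have [N] := ubnP #|fractional y|; elim: N y => // N IH y ltN consy box.
have [F0 | nzF] := eqVneq (fractional y) set0; last first.
  have [y' [consy' box' cost' ltF]] := round_step c consy box nzF.
  have [|z [consz boxz costz]] := IH y' _ consy' box'; first exact: leq_trans ltF _.
  by exists z; split => //; apply: le_trans cost'.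
have yK e : (Num.floor (y e))%:~R = y e.
  apply: floorK; have : e \notin fractional y by rewrite F0 inE.
  by rewrite inE negbK.
exists (fun e => Num.floor (y e)); split.
- by move=> q; under eq_bigr do rewrite yK; exact: consy.
- by move=> e; rewrite -!(ler_int R) yK.
- by under eq_bigr do rewrite yK.
Qed.

End Network.

Lemma pick_unique (Q : finType) (P : pred Q) q :
  (forall q', P q' -> P q -> q' = q) -> ([pick q' | P q'] == Some q) = P q.
Proof.
move=> uniqP; case: pickP => [q' Pq' | noP]; last by rewrite noP.
by apply/eqP/idP => [[<-] // | /(uniqP _ Pq') ->].
Qed.

Lemma in_if (T : finType) (b : bool) (A : {set T}) x :
  x \in (if b then A else set0) -> b /\ x \in A.
Proof. by case: b; rewrite ?inE. Qed.

Section Trees.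
Variable m : nat.
Implicit Types (Tr : {set {set 'I_m}}) (K L I : {set 'I_m}).

Definition singleton_closed Tr := forall A j, A \in Tr -> j \in A -> [set j] \in Tr.

Lemma pred_uniq Tr K L1 L2 : is_pred Tr K L1 -> is_pred Tr K L2 -> L1 = L2.
Proof.
move=> /and3P [H1 P1 /forall_inP F1] /and3P [H2 P2 /forall_inP F2].
apply/eqP; rewrite eqEsubset.
by rewrite (implyP (F1 _ H2) P2) (implyP (F2 _ H1) P1).
Qed.

Lemma succs_pred_uniq Tr X X' K : K \in succs Tr X -> K \in succs Tr X' -> X = X'.
Proof. by rewrite !inE => /andP [_ KX] /andP [_ KX']; exact: pred_uniq KX KX'. Qed.

Lemma succsP Tr I K : K \in succs Tr I -> [/\ K \in Tr, I \in Tr & K \proper I].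
Proof. by rewrite inE => /andP [HK /and3P [HI Hp _]]. Qed.

Lemma succs_triv Tr I : is_tree Tr -> trivIset (succs Tr I).
Proof.
move=> [_ laminar]; apply/trivIsetP => A B; rewrite !inE.
move=> /andP [TA /and3P [_ AI /forall_inP minA]] /andP [TB /and3P [_ BI /forall_inP minB]] nAB.
rewrite -setI_eq0; apply: contraR (nAB) => /(laminar _ _ TA TB) /orP [AB | BA].
  have /(implyP (minA _ TB)) IB : A \proper B by rewrite properEneq nAB.
  by move: BI; rewrite properE IB andbF.
have /(implyP (minB _ TA)) IA : B \proper A by rewrite properEneq eq_sym nAB.
by move: AI; rewrite properE IA andbF.
Qed.

Lemma succs_cover Tr I : is_tree Tr -> singleton_closed Tr ->
  I \in Tr -> #|I| != 1%N -> cover (succs Tr I) = I.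
Proof.
move=> [_ laminar] sing TI nI1; apply/setP => j; apply/bigcupP/idP.
  by case=> K /succsP [_ _ /proper_sub /subsetP]; apply.
move=> jI; pose C := [set L in Tr | (j \in L) && (L \proper I)].
have jC : [set j] \in C.
  rewrite inE (sing _ _ TI jI) set11 properEneq sub1set jI andbT /=.
  by apply: contraNneq nI1 => <-; rewrite cards1.
have [K KC Kmax] := @arg_maxnP _ [set j] (mem C) (fun L => #|L|) jC.
move: KC; rewrite /= inE => /andP [TK /andP [jK KI]].
exists K => //; rewrite inE TK /is_pred TI KI /=.
apply/forall_inP => L TL; apply/implyP => KL.
have jL : j \in L by move/proper_sub/subsetP: KL; apply.
have /orP [LI | IL] // : (L \subset I) || (I \subset L).
  by apply: laminar => //; apply/set0Pn; exists j; rewrite inE jL.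
have [-> // | nLI] := eqVneq L I.
have LC : L \in C by rewrite inE TL jL properEneq nLI LI.
by have := Kmax L LC; rewrite /= leqNgt (proper_card KL).
Qed.

Lemma succs_sum (V : nmodType) Tr I (f : 'I_m -> V) : is_tree Tr ->
  singleton_closed Tr -> I \in Tr -> #|I| != 1%N ->
  \sum_(K in succs Tr I) \sum_(j in K) f j = \sum_(j in I) f j.
Proof.
move=> tree sing TI nI1.
by rewrite -(big_trivIset _ (succs_triv _ tree)) succs_cover.
Qed.

End Trees.

Lemma int_box_argmax (R : realDomainType) (m B : nat) (P : pred ('I_m -> int))
    (f : ('I_m -> int) -> R) x0 :
  P x0 -> (forall x, P x -> forall j, (`|x j| <= B)%N) ->
  exists2 x, P x & forall x', P x' -> f x' <= f x.
Proof.
move=> Px0 boxP.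
pose dec (t : {ffun 'I_m -> 'I_B.*2.+1}) j : int := (t j)%:Z - B%:Z.
pose enc (x : 'I_m -> int) : {ffun 'I_m -> 'I_B.*2.+1} := [ffun j => inord (absz (x j + B%:Z))].
have encK x : P x -> dec (enc x) = x.
  move=> Px; apply: functional_extensionality => j; rewrite /dec /enc ffunE.
  rewrite inordK; move: (boxP x Px j); move: (x j) => a; clear; lia.
have Pt0 : P (dec (enc x0)) by rewrite encK.
have [xm Pxm xmax] := arg_maxP (P := fun t => P (dec t)) (f \o dec) Pt0.
by exists (dec xm) => // x' Px'; rewrite -(encK x' Px'); apply: xmax; rewrite /= encK.
Qed.

Section MCF.
Variables (R : realType) (n m : nat) (k : 'I_m -> 'I_n) (vv : 'I_m -> R)
  (T0 : {set {set 'I_m}}) (T : 'I_n -> {set {set 'I_m}})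
  (l u : {set 'I_m} -> int).
Hypothesis hmsg : assignment_message k T0 T l u.

Local Notation Rs := (Rset k).
Local Notation fam := (Ifam T0 T).

Lemma R_neq0 i : Rs i != set0. Proof. by case: hmsg => + _ _ _ _; apply. Qed.
Lemma T0_tree : is_tree T0. Proof. by case: hmsg => _ []. Qed.
Lemma T_tree i : is_tree (T i). Proof. by case: hmsg => _ [_ +] _ _ _; apply. Qed.
Lemma T_sub i I : I \in T i -> I \subset Rs i.
Proof. by case: hmsg => _ _ /(_ i) [sub _ _] _ _; exact: sub. Qed.
Lemma R_in_T i : Rs i \in T i. Proof. by case: hmsg => _ _ /(_ i) []. Qed.
Lemma setT_in_T0 : [set: 'I_m] \in T0. Proof. by case: hmsg => _ _ _ []. Qed.
Lemma T0_single j : [set j] \in T0. Proof. by case: hmsg => _ _ _ [_ +] _; apply. Qed.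

Lemma T0_sing : singleton_closed T0. Proof. by move=> *; exact: T0_single. Qed.

Lemma T_sing i : singleton_closed (T i).
Proof.
move=> A j TA jA; case: hmsg => _ _ /(_ i) [_ _ ->] //.
by move/subsetP: (T_sub TA); apply.
Qed.

Lemma T0_T_card1 i K : K \in T0 -> K \in T i -> #|K| = 1%N.
Proof.
move=> K0 Ki; have : K \in T0 :&: T i by rewrite inE K0.
by case: hmsg => _ _ _ _ [-> _ _] /imsetP [j _ ->]; rewrite cards1.
Qed.

Lemma T_uniq i i' K : K \in T i -> K \in T i' -> i = i'.
Proof.
move=> Ki Ki'; have [// | ii'] := eqVneq i i'.
case: hmsg => _ _ _ _ [_ disj _].
have : K \in T i :&: T i' by rewrite inE Ki.
by rewrite disj ?inE.
Qed.

Lemma R_inj : injective Rs.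
Proof.
move=> i i' Rii'; have /set0Pn [j jRi] := R_neq0 i.
have jRi' : j \in Rs i' by rewrite -Rii'.
by rewrite !inE in jRi jRi'; rewrite -(eqP jRi) -(eqP jRi').
Qed.

Lemma famP I : reflect (I \in T0 \/ exists i, I \in T i) (I \in fam).
Proof.
rewrite inE; apply: (iffP orP) => [[|/bigcupP [i _]] | [|[i]]];
  [by left | by right; exists i | by left | by right; apply/bigcupP; exists i].
Qed.

Lemma R_in_fam i : Rs i \in fam.
Proof. by apply/famP; right; exists i; exact: R_in_T. Qed.

Lemma single_in_fam j : [set j] \in fam.
Proof. by apply/famP; left; exact: T0_single. Qed.

Lemma bounds_fam (y : {set 'I_m} -> R) I : mcf_feasible k T0 T l u y -> I \in fam ->
  (l I)%:~R <= y I <= (u I)%:~R.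
Proof. by case=> _ _ _ /[apply] -[-> ->]. Qed.

(* Nodes of (MCF): [None] is the equation sum_i y(R_i) = y(J); [Some (None, X)]
   and [Some (Some i, X)] are the equations at a non-singleton node X of T0,
   resp. of T_i. Arcs are the members of the family, entering and leaving
   nodes as prescribed by the signs of the equations. *)
Local Notation node := (option (option 'I_n * {set 'I_m})).

Definition tree_of (o : option 'I_n) : {set {set 'I_m}} :=
  if o is Some i then T i else T0.

Definition inner (o : option 'I_n) (X : {set 'I_m}) : bool :=
  (X \in tree_of o) && (#|X| != 1%N).

Definition arcs_in (q : node) : {set {set 'I_m}} :=
  match q with
  | None => [set Rs i | i in 'I_n]
  | Some (None, X) => if inner None X then [set X] else set0
  | Some (Some i, X) => if inner (Some i) X then succs (T i) X else set0
  end.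

Definition arcs_out (q : node) : {set {set 'I_m}} :=
  match q with
  | None => [set [set: 'I_m]]
  | Some (None, X) => if inner None X then succs T0 X else set0
  | Some (Some i, X) => if inner (Some i) X then [set X] else set0
  end.

Lemma inner0_notin_T i X : inner None X -> X \in T i -> False.
Proof. by move=> /andP [X0 nX1] /(T0_T_card1 X0) X1; rewrite X1 in nX1. Qed.

Lemma innerT_notin_T0 i X : inner (Some i) X -> X \in T0 -> False.
Proof. by move=> /andP [Xi nX1] /T0_T_card1 /(_ Xi) X1; rewrite X1 in nX1. Qed.

Lemma R_notin_succs i i' X : Rs i \in succs (T i') X -> False.
Proof.
move=> /succsP [RT' XT' RX]; have ii' := T_uniq (R_in_T i) RT'; subst i'.
by move: RX; rewrite properE (T_sub XT') andbF.
Qed.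

Lemma setT_notin_succs X : [set: 'I_m] \in succs T0 X -> False.
Proof. by move=> /succsP [_ _]; rewrite properE subsetT andbF. Qed.

Lemma arcs_in_uniq q q' K : K \in arcs_in q -> K \in arcs_in q' -> q = q'.
Proof.
have succsT i X : K \in succs (T i) X -> K \in T i by case/succsP.
case: q => [[[i|] X]|]; case: q' => [[[i'|] X']|] //=.
- move=> /in_if [_ KX] /in_if [_ KX'].
  have ii' := T_uniq (succsT _ _ KX) (succsT _ _ KX'); subst i'.
  by rewrite (succs_pred_uniq KX KX').
- move=> /in_if [_ KX] /in_if [inX' /set1P KX'].
  by case: (inner0_notin_T (i := i) inX'); rewrite -KX'; exact: succsT KX.
- move=> /in_if [_ KX] /imsetP [i' _ KR].
  by case: (R_notin_succs (i := i') (i' := i) (X := X)); rewrite -KR.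
- move=> /in_if [inX /set1P KX] /in_if [_ KX'].
  by case: (inner0_notin_T (i := i') inX); rewrite -KX; exact: succsT KX'.
- by move=> /in_if [_ /set1P <-] /in_if [_ /set1P <-].
- move=> /in_if [inX /set1P KX] /imsetP [i' _ KR].
  by case: (inner0_notin_T (i := i') inX); rewrite -KX KR R_in_T.
- move=> /imsetP [i _ KR] /in_if [_ KX'].
  by case: (R_notin_succs (i := i) (i' := i') (X := X')); rewrite -KR.
- move=> /imsetP [i _ KR] /in_if [inX' /set1P KX'].
  by case: (inner0_notin_T (i := i) inX'); rewrite -KX' KR R_in_T.
Qed.

Lemma arcs_out_uniq q q' K : K \in arcs_out q -> K \in arcs_out q' -> q = q'.
Proof.
have succs0 X : K \in succs T0 X -> K \in T0 by case/succsP.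
case: q => [[[i|] X]|]; case: q' => [[[i'|] X']|] //=.
- move=> /in_if [/andP [Xi _] /set1P KX] /in_if [/andP [Xi' _] /set1P KX'].
  by subst X X'; rewrite (T_uniq Xi Xi').
- move=> /in_if [inX /set1P KX] /in_if [_ KX'].
  by case: (innerT_notin_T0 inX); rewrite -KX; exact: succs0 KX'.
- move=> /in_if [inX /set1P KX] /set1P KJ.
  by case: (innerT_notin_T0 inX); rewrite -KX KJ setT_in_T0.
- move=> /in_if [_ KX] /in_if [inX' /set1P KX'].
  by case: (innerT_notin_T0 inX'); rewrite -KX'; exact: succs0 KX.
- by move=> /in_if [_ KX] /in_if [_ KX']; rewrite (succs_pred_uniq KX KX').
- by move=> /in_if [_ KX] /set1P KJ; case: (setT_notin_succs (X := X)); rewrite -KJ.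
- move=> /set1P KJ /in_if [inX' /set1P KX'].
  by case: (innerT_notin_T0 inX'); rewrite -KX' KJ setT_in_T0.
- by move=> /set1P KJ /in_if [_ KX']; case: (setT_notin_succs (X := X')); rewrite -KJ.
Qed.

Definition head (K : {set 'I_m}) : option node := [pick q | K \in arcs_in q].
Definition tail (K : {set 'I_m}) : option node := [pick q | K \in arcs_out q].

Definition mcf_row (y : {set 'I_m} -> R) (q : node) : R :=
  \sum_(K in arcs_in q) y K - \sum_(K in arcs_out q) y K.

Lemma sum_inc_row (y : {set 'I_m} -> R) q :
  \sum_K inc R tail head q K * y K = mcf_row y q.
Proof.
rewrite sum_inc; congr (_ - _); apply: eq_bigl => K; rewrite pick_unique //.
- by move=> q'; exact: arcs_in_uniq.
- by move=> q'; exact: arcs_out_uniq.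
Qed.

Definition mcf_balance (y : {set 'I_m} -> R) : Prop :=
  [/\ (forall I, I \in T0 -> #|I| != 1%N -> y I - \sum_(K in succs T0 I) y K = 0),
      (forall i I, I \in T i -> #|I| != 1%N -> \sum_(K in succs (T i) I) y K - y I = 0) &
      \sum_(i < n) y (Rs i) - y [set: 'I_m] = 0].

Lemma balance_rows (y : {set 'I_m} -> R) : mcf_balance y <-> forall q, mcf_row y q = 0.
Proof.
rewrite /mcf_row; split.
- case=> eq0 eqT eqR [[[i|] X]|] /=.
  + by case: ifP => [/andP [XT nX1] | _]; rewrite ?big_set0 ?subrr // big_set1 eqT.
  + by case: ifP => [/andP [X0 nX1] | _]; rewrite ?big_set0 ?subrr // big_set1 eq0.
  + by rewrite big_set1 big_imset //=; exact: in2W R_inj.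
- move=> rows; split.
  + by move=> X X0 nX1; have := rows (Some (None, X)); rewrite /= /inner /= X0 nX1 big_set1.
  + by move=> i X Xi nX1; have := rows (Some (Some i, X)); rewrite /= /inner /= Xi nX1 big_set1.
  + by have := rows None; rewrite /= big_set1 big_imset //=; exact: in2W R_inj.
Qed.

Lemma arcs_in_fam q : arcs_in q \subset fam.
Proof.
apply/subsetP => K; case: q => [[[i|] X]|] /=.
- by move=> /in_if [_ /succsP [Ki _ _]]; apply/famP; right; exists i.
- by move=> /in_if [/andP [X0 _] /set1P ->]; apply/famP; left.
- by move=> /imsetP [i _ ->]; apply/famP; right; exists i; exact: R_in_T.
Qed.

Lemma arcs_out_fam q : arcs_out q \subset fam.
Proof.
apply/subsetP => K; case: q => [[[i|] X]|] /=.
- by move=> /in_if [/andP [Xi _] /set1P ->]; apply/famP; right; exists i.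
- by move=> /in_if [_ /succsP [K0 _ _]]; apply/famP; left.
- by move=> /set1P ->; apply/famP; left; exact: setT_in_T0.
Qed.

Lemma mcf_row_fam (y y' : {set 'I_m} -> R) q :
  {in fam, y =1 y'} -> mcf_row y q = mcf_row y' q.
Proof.
move=> yy'; rewrite /mcf_row; congr (_ - _); apply: eq_bigr => K KA; apply: yy'.
- exact: subsetP (arcs_in_fam q) K KA.
- exact: subsetP (arcs_out_fam q) K KA.
Qed.

Lemma balance_additive (y : {set 'I_m} -> R) : mcf_balance y ->
  {in fam, forall I, y I = \sum_(j in I) y [set j]}.
Proof.
case=> eq0 eqT _ I; have [N] := ubnP #|I|; elim: N I => // N IH I ltIN /famP famI.
have [/eqP/cards1P [j ->] | nI1] := eqVneq #|I| 1%N; first by rewrite big_set1.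
have by_succs Tr : is_tree Tr -> singleton_closed Tr -> I \in Tr -> Tr \subset fam ->
    \sum_(K in succs Tr I) y K = \sum_(j in I) y [set j].
  move=> tree sing ITr Trfam; rewrite -(succs_sum _ tree sing ITr nI1).
  apply: eq_bigr => K /succsP [KTr _ KI]; apply: IH; last exact: subsetP Trfam K KTr.
  exact: leq_trans (proper_card KI) _.
case: famI => [I0 | [i Ii]].
- move/eqP: (eq0 I I0 nI1); rewrite subr_eq0 => /eqP ->; apply: by_succs => //.
  + exact: T0_tree.
  + exact: T0_sing.
  + by apply/subsetP => K K0; apply/famP; left.
- move/eqP: (eqT i I Ii nI1); rewrite subr_eq0 => /eqP <-; apply: by_succs => //.
  + exact: T_tree.
  + exact: T_sing.
  + by apply/subsetP => K Ki; apply/famP; right; exists i.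
Qed.

Lemma sum_R_partition (V : nmodType) (f : 'I_m -> V) :
  \sum_i \sum_(j in Rs i) f j = \sum_j f j.
Proof.
rewrite [RHS](partition_big k predT) //=; apply: eq_bigr => i _.
by apply: eq_bigl => j; rewrite inE.
Qed.

Definition lift (x : 'I_m -> R) (I : {set 'I_m}) : R := \sum_(j in I) x j.

Lemma lift_balance x : mcf_balance (lift x).
Proof.
rewrite /lift; split.
- by move=> I I0 nI1; rewrite (succs_sum _ T0_tree T0_sing I0 nI1) subrr.
- by move=> i I Ii nI1; rewrite (succs_sum _ (T_tree i) (@T_sing i) Ii nI1) subrr.
- by rewrite sum_R_partition; under [X in _ - X]eq_bigl do rewrite inE; rewrite subrr.
Qed.

Lemma mcf_obj_singletons p (y : {set 'I_m} -> R) :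
  mcf_obj k vv p y = \sum_j (p (k j) - vv j) * y [set j].
Proof.
rewrite /mcf_obj -sum_R_partition; apply: eq_bigr => i _.
by apply: eq_bigr => j; rewrite inE => /eqP ->.
Qed.

Definition arc_cost (p : 'I_n -> R) (K : {set 'I_m}) : R :=
  \sum_j (K == [set j])%:R * (p (k j) - vv j).

Lemma mcf_obj_cost p (y : {set 'I_m} -> R) :
  mcf_obj k vv p y = \sum_K arc_cost p K * y K.
Proof.
rewrite mcf_obj_singletons /arc_cost; under [RHS]eq_bigr do rewrite mulr_suml.
rewrite exchange_big /=; apply: eq_bigr => j _.
rewrite (bigD1 [set j]) //= eqxx mul1r big1 ?addr0 // => K /negPf ->.
by rewrite !mul0r.
Qed.

(* Integrality of (MCF): every feasible solution is dominated by an
   integral one (the constraint matrix is a network matrix). *)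
Lemma mcf_integral p (y : {set 'I_m} -> R) : mcf_feasible k T0 T l u y ->
  exists z : {set 'I_m} -> int,
    mcf_feasible k T0 T l u (fun K => (z K)%:~R : R) /\
    mcf_obj k vv p (fun K => (z K)%:~R : R) <= mcf_obj k vv p y.
Proof.
move=> feas; have [eq0 eqT eqR _] := feas.
pose y0 K := if K \in fam then y K else 0.
pose lo K := if K \in fam then l K else 0.
pose hi K := if K \in fam then u K else 0.
have y0y : {in fam, y0 =1 y} by move=> K KA; rewrite /y0 KA.
have cons0 : conservative tail head y0.
  move=> q; rewrite sum_inc_row (mcf_row_fam q y0y); move: q.
  by apply/balance_rows; split.
have box0 K : (lo K)%:~R <= y0 K <= (hi K)%:~R.
  by rewrite /lo /hi /y0; case: ifP => [/(bounds_fam feas) | _]; rewrite ?lexx.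
have [z [consz boxz costz]] := integral_rounding (arc_cost p) cons0 box0.
exists z; split.
- have [eqz0 eqzT eqzR] : mcf_balance (fun K => (z K)%:~R : R).
    by apply/balance_rows => q; rewrite -sum_inc_row; exact: consz.
  split => // K KA; have /andP [] := boxz K; rewrite /lo /hi KA.
  by rewrite -!(ler_int R) => -> ->.
- rewrite !mcf_obj_cost [X in _ <= X](eq_bigr (fun K => arc_cost p K * y0 K)) => [// | K _].
  rewrite /y0; case: ifP => // KNA; rewrite /arc_cost big1 ?mul0r // => j _.
  have /negPf -> : K != [set j]; last by rewrite mul0r.
  by apply: contraFneq KNA => ->; exact: single_in_fam.
Qed.

Definition x_feasibleb (q : 'I_n -> int) (x : 'I_m -> int) : bool :=
  [forall I in fam, (l I <= \sum_(j in I) x j <= u I)%R] &&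
  [forall i, \sum_(j in Rs i) x j == q i].

Lemma x_feasibleP q x : reflect (x_feasible k T0 T l u q x) (x_feasibleb q x).
Proof.
apply: (iffP andP) => [[/forall_inP bnd /forallP sumR] | [bnd sumR]].
  by split=> [I /bnd /andP [] | i]; [split | exact/eqP/sumR].
split; first by apply/forall_inP => I /bnd [-> ->].
by apply/forallP => i; rewrite sumR.
Qed.

(* v(q) is attained whenever q lies in Q: a feasible x is bounded by the
   singleton constraints. *)
Lemma val_exists q : in_Q k T0 T l u q -> exists w, is_val k vv T0 T l u q w.
Proof.
case=> x0 /x_feasibleP feas0.
pose B := (\sum_j (`|l [set j]| + `|u [set j]|))%N.
have boxB x : x_feasibleb q x -> forall j, (`|x j| <= B)%N.
  move=> /x_feasibleP [bnd _] j.
  have [] := bnd [set j] (single_in_fam j).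
  rewrite big_set1 => lo hi.
  have : (`|l [set j]| + `|u [set j]| <= B)%N by rewrite /B (bigD1 j) //= leq_addr.
  move: (x j) (l [set j]) (u [set j]) lo hi => a b c; lia.
have [x feas xmax] := int_box_argmax (x_value vv) feas0 boxB.
exists (x_value vv x); split; first by exists x; split => //; exact/x_feasibleP.
by move=> x' /x_feasibleP; exact: xmax.
Qed.

Local Notation ilift x := (lift (fun j => ((x j)%:~R : R))).

Lemma lift_feasible (x : 'I_m -> int) :
  (forall I, I \in fam -> (l I <= \sum_(j in I) x j)%R /\ (\sum_(j in I) x j <= u I)%R) ->
  mcf_feasible k T0 T l u (ilift x).
Proof.
move=> bnd; have [eq0 eqT eqR] := lift_balance (fun j => (x j)%:~R).
by split => // I /bnd [lo hi]; rewrite /lift -rmorph_sum !ler_int.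
Qed.

Lemma mcf_obj_fam p (y y' : {set 'I_m} -> R) :
  {in fam, y =1 y'} -> mcf_obj k vv p y = mcf_obj k vv p y'.
Proof.
move=> yy'; rewrite !mcf_obj_singletons; apply: eq_bigr => j _.
by rewrite yy' // single_in_fam.
Qed.

Lemma mcf_obj_lift p q (x : 'I_m -> int) :
  (forall i, \sum_(j in Rs i) x j = q i) ->
  mcf_obj k vv p (ilift x) = pairing p q - x_value vv x.
Proof.
move=> sumR; rewrite mcf_obj_singletons /pairing /x_value.
under eq_bigr do rewrite /lift big_set1 mulrBl.
rewrite sumrB -sum_R_partition; congr (_ - _); apply: eq_bigr => i _.
rewrite -sumR rmorph_sum mulr_sumr; apply: eq_bigr => j.
by rewrite inE => /eqP ->.
Qed.

Lemma integral_feasible_lift (y : {set 'I_m} -> R) :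
  mcf_feasible k T0 T l u y -> integral_sol T0 T y ->
  exists x : 'I_m -> int, {in fam, y =1 ilift x} /\
    x_feasible k T0 T l u (fun i => \sum_(j in Rs i) x j) x.
Proof.
move=> feas yint; pose x j := Num.floor (y [set j]).
have yx : {in fam, y =1 ilift x}.
  have [eq0 eqT eqR _] := feas.
  move=> I IA; rewrite (balance_additive (And3 eq0 eqT eqR) IA); apply: eq_bigr => j _.
  by have [z yz] := yint [set j] (single_in_fam j); rewrite /x yz intrKfloor.
exists x; split => //; split => // I IA.
by have := bounds_fam feas IA; rewrite yx // /lift -rmorph_sum !ler_int => /andP.
Qed.

Lemma mcf_lower_bound p (y : {set 'I_m} -> R) : mcf_feasible k T0 T l u y ->
  exists q' x', x_feasible k T0 T l u q' x' /\
    pairing p q' - x_value vv x' <= mcf_obj k vv p y.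
Proof.
move=> feas; have [z [feasz objz]] := mcf_integral p feas.
have [|x [zx xfeas]] := integral_feasible_lift feasz; first by move=> I _; exists (z I).
exists (fun i => \sum_(j in Rs i) x j), x; split => //.
by rewrite -(mcf_obj_lift p (fun=> erefl)) -(mcf_obj_fam p zx).
Qed.

Lemma demand_mcf p q : demand k vv T0 T l u p q ->
  exists y : {set 'I_m} -> R,
    [/\ mcf_optimal k vv T0 T l u p y, integral_sol T0 T y &
        forall i, y (Rs i) = (q i)%:~R].
Proof.
case=> _ [w [[[x [[bnd sumR] xw]] _] best]].
exists (ilift x); split.
- split => [|y' feas']; first exact: lift_feasible.
  rewrite (mcf_obj_lift p sumR) xw.
  have [q' [x' [feas'x lb]]] := mcf_lower_bound p feas'.
  have [w' val'] := val_exists (ex_intro _ x' feas'x).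
  have := best q' w' (ex_intro _ x' feas'x) val'.
  have : x_value vv x' <= w' by case: val' => _; apply.
  lra.
- by move=> I _; exists (\sum_(j in I) x j); rewrite /lift rmorph_sum.
- by move=> i; rewrite /lift -rmorph_sum sumR.
Qed.

Lemma mcf_demand p q (y : {set 'I_m} -> R) :
  mcf_optimal k vv T0 T l u p y -> integral_sol T0 T y ->
  (forall i, y (Rs i) = (q i)%:~R) -> demand k vv T0 T l u p q.
Proof.
move=> [feas opt] yint yq.
have [x [yx [bnd _]]] := integral_feasible_lift feas yint.
have sumR i : \sum_(j in Rs i) x j = q i.
  by apply: (@intr_inj R); rewrite -yq yx ?R_in_fam // /lift rmorph_sum.
have objy : mcf_obj k vv p y = pairing p q - x_value vv x.
  by rewrite (mcf_obj_fam p yx) (mcf_obj_lift p sumR).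
have best q' x' : x_feasible k T0 T l u q' x' ->
    x_value vv x' - pairing p q' <= x_value vv x - pairing p q.
  case=> bnd' sumR'; have := opt _ (lift_feasible bnd').
  rewrite objy (mcf_obj_lift p sumR'); lra.
have xfeas : x_feasible k T0 T l u q x by split.
split; first by exists x.
exists (x_value vv x); split.
- split=> [|x' fx']; first by exists x.
  by have := best q x' fx'; lra.
- by move=> q' w' _ [[x' [fx' <-]] _]; exact: best.
Qed.

End MCF.

Theorem mainTheorem3 (R : realType) (n m : nat) (hn : (2 <= n)%N)
  (k : 'I_m -> 'I_n) (vv : 'I_m -> R)
  (T0 : {set {set 'I_m}}) (T : 'I_n -> {set {set 'I_m}})
  (l u : {set 'I_m} -> int)
  (hmsg : assignment_message k T0 T l u)
  (p : 'I_n -> R) (q : 'I_n -> int) :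
  demand k vv T0 T l u p q <->
  exists y : {set 'I_m} -> R,
    [/\ mcf_optimal k vv T0 T l u p y,
        integral_sol T0 T y &
        forall i, y (Rset k i) = (q i)%:~R].
Proof.
split; first exact: demand_mcf.
by case=> y [opt yint yq]; exact: mcf_demand opt yint yq.
Qed.
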